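(* Let $X$ be an instance set, $f:X\to\mathcal{F}$ a feature map with $\mathcal{F}$ finite, $\mathcal{A}$ a set of algorithms with performance measure $\mathrm{cost}:\mathcal{A}\times X\to\mathbb{R}$ such that the class $\{x\mapsto\mathrm{cost}(A,x):A\in\mathcal{A}\}$ has pseudo-dimension $d$, and $\mathcal{G}$ a set of maps $g:\mathcal{F}\to\mathcal{A}$. Then the class $\{x\mapsto \mathrm{cost}(g(f(x)),x): g\in\mathcal{G}\}$ has pseudo-dimension at most $|\mathcal{F}|\,d$.
   Context: Pseudo-dimension: a finite set $\{x_1,\dots,x_m\}$ is shattered by a class $\mathcal{H}$ of real functions if there exist reals $r_i$ such that for every $T\subseteq\{1,\dots,m\}$ some $h\in\mathcal{H}$ has $h(x_i)>r_i\iff i\in T$; the pseudo-dimension is the largest size of a shattered set. *)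

From Stdlib Require Import Reals List.
Open Scope R_scope.

Definition fclass (X : Type) := (X -> R) -> Prop.

Definition shatters_size {X : Type} (H : fclass X) (m : nat) : Prop :=
  exists x : nat -> X,
    (forall i j, (i < m)%nat -> (j < m)%nat -> x i = x j -> i = j) /\
    exists r : nat -> R,
      forall T : nat -> bool,
        exists h, H h /\
          forall i, (i < m)%nat -> (h (x i) > r i <-> T i = true).

Definition pdim_eq {X : Type} (H : fclass X) (d : nat) : Prop :=
  shatters_size H d /\ forall m, shatters_size H m -> (m <= d)%nat.

Definition pdim_le {X : Type} (H : fclass X) (d : nat) : Prop :=
  forall m, shatters_size H m -> (m <= d)%nat.

Definition cost_class {X Alg : Type} (Algs : Alg -> Prop) (cost : Alg -> X -> R)
  : fclass X := fun h => exists a, Algs a /\ h = cost a.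

Definition composed_class {X Feat Alg : Type} (f : X -> Feat)
  (cost : Alg -> X -> R) (G : (Feat -> Alg) -> Prop) : fclass X :=
  fun h => exists g, G g /\ h = (fun x => cost (g (f x)) x).

(* The points of a shattered set split into at most |F| blocks according to
   their feature value.  On the block of feature y every composed function
   x |-> cost(g(f x), x) coincides with the single function cost(g y, -) of the
   base class, so each block is shattered by the base class and has at most d
   points; hence the whole set has at most |F| d points. *)

From Stdlib Require Import Reals List Lia ClassicalEpsilon.
Open Scope R_scope.

Definition shatters_at {X : Type} (H : fclass X) (m : nat) (x : nat -> X)
  (r : nat -> R) : Prop :=
  forall T : nat -> bool, exists h, H h /\
    forall i, (i < m)%nat -> (h (x i) > r i <-> T i = true).

Lemma shatters_at_reindex {X : Type} (H H' : fclass X) (m n : nat)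
  (x : nat -> X) (r : nat -> R) (e : nat -> nat) :
  (forall t, (t < n)%nat -> (e t < m)%nat) ->
  (forall t t', (t < n)%nat -> (t' < n)%nat -> e t = e t' -> t = t') ->
  (forall h, H h -> exists h', H' h' /\
     forall t, (t < n)%nat -> h' (x (e t)) = h (x (e t))) ->
  shatters_at H m x r ->
  shatters_at H' n (fun t => x (e t)) (fun t => r (e t)).
Proof.
  intros e_range e_inj H_H' Hsh T.
  set (T_ext i := existsb (fun t => andb (Nat.eqb (e t) i) (T t)) (seq 0 n)).
  assert (T_extE : forall t, (t < n)%nat -> T_ext (e t) = T t).
  { intros t Ht. apply Bool.eq_iff_eq_true. unfold T_ext.
    rewrite existsb_exists. split.
    - intros [t' [Ht' Hsel]]. apply andb_prop in Hsel as [Heq HT].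
      apply in_seq in Ht'. apply Nat.eqb_eq, e_inj in Heq; [subst; exact HT | lia | exact Ht].
    - intros HT. exists t. rewrite in_seq, Nat.eqb_refl, HT. split; [lia | reflexivity]. }
  destruct (Hsh T_ext) as [h [Hh h_sel]].
  destruct (H_H' h Hh) as [h' [Hh' h'_agree]].
  exists h'. split; [exact Hh'|].
  intros t Ht. rewrite h'_agree, <- T_extE by exact Ht.
  apply h_sel, e_range, Ht.
Qed.

Lemma shatters_size_sublist {X : Type} (H H' : fclass X) (m : nat)
  (x : nat -> X) (r : nat -> R) (b : list nat) :
  (forall i j, (i < m)%nat -> (j < m)%nat -> x i = x j -> i = j) ->
  shatters_at H m x r ->
  NoDup b -> (forall i, In i b -> (i < m)%nat) ->
  (forall h, H h -> exists h', H' h' /\ forall i, In i b -> h' (x i) = h (x i)) ->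
  shatters_size H' (length b).
Proof.
  intros x_inj Hsh b_nodup b_range H_H'.
  set (e t := nth t b 0%nat).
  assert (e_in : forall t, (t < length b)%nat -> In (e t) b) by (intros; apply nth_In; lia).
  assert (e_inj : forall t t', (t < length b)%nat -> (t' < length b)%nat -> e t = e t' -> t = t')
    by (apply NoDup_nth; exact b_nodup).
  exists (fun t => x (e t)). split.
  - intros t t' Ht Ht' Heq. apply e_inj, x_inj; auto.
  - exists (fun t => r (e t)).
    apply (shatters_at_reindex H H' m); auto.
    intros h Hh. destruct (H_H' h Hh) as [h' [Hh' agree]].
    exists h'. split; auto.
Qed.

Section Pigeonhole.

Variables (A B : Type) (eq_dec : forall a a' : A, {a = a'} + {a <> a'}) (key : B -> A).

Definition in_fiber (a : A) (b : B) : bool := if eq_dec (key b) a then true else false.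

Lemma length_filter_filter_le (p q : B -> bool) (l : list B) :
  (length (filter p (filter q l)) <= length (filter p l))%nat.
Proof.
  induction l as [|b l IH]; simpl; [lia|].
  destruct (q b); simpl; destruct (p b); simpl; lia.
Qed.

Lemma length_le_mul_fiber_bound (enum : list A) (d : nat) :
  forall l : list B,
  (forall b, In b l -> In (key b) enum) ->
  (forall a, In a enum -> (length (filter (in_fiber a) l) <= d)%nat) ->
  (length l <= length enum * d)%nat.
Proof.
  induction enum as [|a enum IH]; intros l covered fiber_le.
  - destruct l as [|b l]; simpl; [lia|]. destruct (covered b (or_introl eq_refl)).
  - rewrite <- (filter_length (in_fiber a) l). simpl.
    set (rest := filter (fun b => negb (in_fiber a b)) l).
    assert (rest_le : (length rest <= length enum * d)%nat).
    { apply IH.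
      - intros b Hb. apply filter_In in Hb as [Hb Hnot].
        destruct (covered b Hb) as [Ha|]; [|assumption].
        unfold in_fiber in Hnot. destruct (eq_dec (key b) a); [discriminate | congruence].
      - intros a' Ha'. eapply Nat.le_trans; [apply length_filter_filter_le|].
        apply fiber_le. right. exact Ha'. }
    specialize (fiber_le a (or_introl eq_refl)). lia.
Qed.

End Pigeonhole.

Theorem mainTheorem5
  (X Feat Alg : Type) (f : X -> Feat)
  (enumF : list Feat) (enumF_nodup : NoDup enumF)
  (enumF_full : forall y : Feat, In y enumF)
  (Algs : Alg -> Prop) (cost : Alg -> X -> R) (d : nat)
  (hd : pdim_eq (cost_class Algs cost) d)
  (G : (Feat -> Alg) -> Prop)
  (hG : forall g, G g -> forall y, Algs (g y)) :
  pdim_le (composed_class f cost G) (length enumF * d).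
Proof.
  intros m [x [x_inj [r Hsh]]].
  set (feat_dec := fun y y' : Feat => excluded_middle_informative (y = y')).
  set (feat_of i := f (x i)).
  rewrite <- (length_seq m 0).
  apply (length_le_mul_fiber_bound _ _ feat_dec feat_of).
  - intros i _. apply enumF_full.
  - intros y _. apply (proj2 hd).
    apply (shatters_size_sublist (composed_class f cost G) _ m x r); auto.
    + apply NoDup_filter, seq_NoDup.
    + intros i Hi. apply filter_In, proj1, in_seq in Hi. lia.
    + intros h [g [Gg ->]]. exists (cost (g y)). split.
      * exists (g y). auto.
      * intros i Hi. apply filter_In in Hi as [_ Hy]. unfold in_fiber, feat_of in Hy.
        destruct (feat_dec (f (x i)) y) as [<-|]; [reflexivity | discriminate].
Qed.
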